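(* The set $\widehat{c}\setminus c$ is strongly $\mathfrak{c}$-algebrable in the algebra $\ell^\infty$ (with pointwise operations).
   Context: $\ell^\infty$ is the algebra of bounded real sequences with coordinatewise addition, scalar multiplication and multiplication; $c$ is the set of convergent sequences. A Banach limit is a linear functional $L\colon\ell^\infty\to\mathbb R$ such that for every $(x_n)\in\ell^\infty$: (1) if $x_n\ge0$ for all $n$ then $L((x_n))\ge0$; (2) $L((x_2,x_3,\dots))=L((x_1,x_2,\dots))$; (3) $L((1,1,\dots))=1$. $\widehat{c}$ is the set of $x\in\ell^\infty$ for which there is $s\in\mathbb R$ with $L(x)=s$ for every Banach limit $L$. A subset $A$ of a commutative algebra $\mathcal L$ is strongly $\kappa$-algebrable if $A\cup\{0\}$ contains a $\kappa$-generated subalgebra (minimal number of generators of cardinality $\kappa$) which is isomorphic to a free algebra; equivalently, there is a set $Z\subset\mathcal L$ of cardinality $\kappa$ such that for every $n$, every non-zero polynomial $P$ in $n$ variables without constant term and all distinct $z_1,\dots,z_n\in Z$, $P(z_1,\dots,z_n)\in A\setminus\{0\}$. $\mathfrak c$ is the cardinality of the continuum. *)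

From Stdlib Require Import Reals.
From mathcomp Require Import all_boot all_algebra.
From mathcomp Require Import Rstruct.
From mathcomp Require Import mpoly.

Set Implicit Arguments.
Unset Strict Implicit.
Unset Printing Implicit Defensive.

Definition bounded_seq (x : nat -> R) : Prop :=
  exists M : R, forall n : nat, (Rabs (x n) <= M)%R.

(* Banach limit: a linear functional on l^oo (values outside l^oo are irrelevant)
   that is positive, shift-invariant and maps the constant 1 to 1. *)
Definition is_banach_limit (L : (nat -> R) -> R) : Prop :=
  (forall (x y : nat -> R) (a b : R), bounded_seq x -> bounded_seq y ->
     L (fun n => a * x n + b * y n)%R = (a * L x + b * L y)%R) /\
  (forall x : nat -> R, bounded_seq x -> (forall n, 0 <= x n)%R -> (0 <= L x)%R) /\
  (forall x : nat -> R, bounded_seq x -> L (fun n => x (S n)) = L x) /\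
  L (fun _ => 1%R) = 1%R.

Definition c_hat (x : nat -> R) : Prop :=
  bounded_seq x /\ exists s : R, forall L, is_banach_limit L -> L x = s.

Definition convergent (x : nat -> R) : Prop := exists l : R, Un_cv x l.

Definition mpoly_eval_seq (n : nat) (P : {mpoly R[n]}) (z : 'I_n -> nat -> R)
  : nat -> R := fun k => P.@[fun i => z i k].

(* Strong kappa-algebrability (pointwise algebra of real sequences) with
   kappa = continuum: a set Z of l^oo of cardinality |R| (image of an
   injection from R) such that every nonzero polynomial without constant term
   evaluated at distinct elements of Z lands in A \ {0}. *)
Section PolyHelpers.
Local Open Scope ring_scope.
Definition no_const_term (n : nat) (P : {mpoly R[n]}) : Prop := P@_0%MM = 0.
Definition nonzero_mpoly (n : nat) (P : {mpoly R[n]}) : Prop := P != 0.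
End PolyHelpers.

Definition strongly_c_algebrable (A : (nat -> R) -> Prop) : Prop :=
  exists f : R -> (nat -> R),
    (forall r s, f r = f s -> r = s) /\
    (forall r, bounded_seq (f r)) /\
    forall (n : nat) (P : {mpoly R[n]}) (idx : 'I_n -> R),
      injective idx -> nonzero_mpoly P -> no_const_term P ->
      A (mpoly_eval_seq P (fun i => f (idx i))) /\
      mpoly_eval_seq P (fun i => f (idx i)) <> (fun _ => 0%R).

(* A Banach limit L vanishes on every bounded sequence supported on the set S
   of powers of two: far out, a window of N consecutive indices meets S at most
   once, so N L(1_S) <= L(1) = 1 for all N.
   The real r is sent to a sequence f_r with values in [0, 1], supported on the
   powers of two, whose value at 2^k is dictated by the k-th code: a scale m and
   a finite table assigning numbers ((j+1)^-1)^e to dyadic floors floor(r 2^m);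
   every code is listed infinitely often.  Let P be a nonzero polynomial without
   constant term and r_1, ..., r_n distinct.  Then P(f_r1, ..., f_rn) is bounded
   and supported on the powers of two, hence in c-hat.  A Kronecker substitution
   t_i = t^(D^i) turns P into a nonzero one-variable polynomial, so some
   C = P(((j+1)^-1)^(D^i))_i is nonzero; a code realising r_i |-> ((j+1)^-1)^(D^i)
   makes the sequence equal C infinitely often, while it is 0 off the powers of
   two, so it diverges. *)

From Stdlib Require Import Reals FunctionalExtensionality.
From mathcomp Require Import all_boot all_order all_algebra.
From mathcomp Require Import Rstruct lra zify.
From mathcomp Require Import mpoly.

Set Implicit Arguments.
Unset Strict Implicit.
Unset Printing Implicit Defensive.
Import Order.TTheory GRing.Theory Num.Theory.
Local Open Scope ring_scope.

Lemma bounded_seqP (x : nat -> R) :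
  bounded_seq x <-> exists M : R, forall n, `|x n| <= M.
Proof. by []. Qed.

Lemma bounded_seq_indicator (S : pred nat) : bounded_seq (fun n => (S n)%:R).
Proof. by apply/bounded_seqP; exists 1 => n; case: (S n); rewrite ?normr1 ?normr0. Qed.

Lemma bounded_seq_shift (x : nat -> R) k :
  bounded_seq x -> bounded_seq (fun n => x (n + k)%N).
Proof. by move=> [M hM]; exists M. Qed.

Lemma bounded_seq_lin (x y : nat -> R) (a b : R) :
  bounded_seq x -> bounded_seq y -> bounded_seq (fun n => a * x n + b * y n).
Proof.
move=> /bounded_seqP[M hM] /bounded_seqP[N hN]; apply/bounded_seqP.
exists (`|a| * M + `|b| * N) => n.
apply: le_trans (ler_normD _ _) _; rewrite !normrM.
by apply: lerD; apply: ler_wpM2l.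
Qed.

Lemma bounded_seqZ (x : nat -> R) (a : R) :
  bounded_seq x -> bounded_seq (fun n => a * x n).
Proof.
move=> /bounded_seqP[M hM]; apply/bounded_seqP; exists (`|a| * M) => n.
by rewrite normrM ler_wpM2l.
Qed.

Lemma bounded_seq_sum (I : finType) (F : I -> nat -> R) :
  (forall i, bounded_seq (F i)) -> bounded_seq (fun n => \sum_i F i n).
Proof.
move=> hF; have /fin_all_exists [M hM] i := iffLR (bounded_seqP _) (hF i).
apply/bounded_seqP; exists (\sum_i M i) => n; apply: le_trans (ler_norm_sum _ _ _) _.
by apply: ler_sum => i _; apply: hM.
Qed.

Definition sparse (S : pred nat) : Prop :=
  forall N, exists M, forall a b, (M <= a < b)%N -> S a -> S b -> (N <= b - a)%N.

Lemma sparse_window_sum (S : pred nat) N M n :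
  (forall a b, (M <= a < b)%N -> S a -> S b -> (N <= b - a)%N) ->
  \sum_(j < N) (S (n + j + M)%N)%:R <= 1 :> R.
Proof.
move=> hM; case: (pickP (fun j : 'I_N => S (n + j + M)%N)) => [j0 Sj0 | none].
  rewrite (bigD1 j0) //= Sj0 big1 ?addr0 // => j hj; apply/eqP.
  rewrite pnatr_eq0 eqb0; apply/negP => Sj; move: hj; rewrite -val_eqE /=.
  have := ltn_ord j; have := ltn_ord j0.
  case: (ltngtP j0 j) => hlt //.
  - have h : (M <= n + j0 + M < n + j + M)%N by lia.
    have := hM _ _ h Sj0 Sj; lia.
  - have h : (M <= n + j + M < n + j0 + M)%N by lia.
    have := hM _ _ h Sj Sj0; lia.
by rewrite big1 ?ler01 // => j _; rewrite none.
Qed.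

Lemma natmul_le1_le0 (F : archiRealFieldType) (a : F) :
  (forall N : nat, N%:R * a <= 1) -> a <= 0.
Proof.
move=> bnd; rewrite leNgt; apply/negP => a_gt0.
have := archi_boundP (ltW (_ : 0 < a^-1)); rewrite invr_gt0 => /(_ a_gt0).
set k := Num.Def.archi_bound _ => hk.
by have := bnd k; rewrite leNgt -ltr_pdivrMr // div1r hk.
Qed.

Section BanachLimit.

Variable L : (nat -> R) -> R.
Hypothesis hL : is_banach_limit L.

Lemma banach_limit_eq (x y : nat -> R) : x =1 y -> L x = L y.
Proof. by move=> /functional_extensionality ->. Qed.

Lemma banach_limit_lin (x y : nat -> R) (a b : R) :
  bounded_seq x -> bounded_seq y ->
  L (fun n => a * x n + b * y n) = a * L x + b * L y.
Proof. by case: hL => lin _; apply: lin. Qed.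

Lemma banach_limitD (x y : nat -> R) :
  bounded_seq x -> bounded_seq y -> L (fun n => x n + y n) = L x + L y.
Proof.
move=> bx by_; rewrite -[L x]mul1r -[L y]mul1r -banach_limit_lin //.
by apply: banach_limit_eq => n; rewrite !mul1r.
Qed.

Lemma banach_limitZ (a : R) (x : nat -> R) :
  bounded_seq x -> L (fun n => a * x n) = a * L x.
Proof.
move=> bx; rewrite -[RHS]addr0 -[X in _ + X](mul0r (L x)) -banach_limit_lin //.
by apply: banach_limit_eq => n; rewrite mul0r addr0.
Qed.

Lemma banach_limit_le (x y : nat -> R) :
  bounded_seq x -> bounded_seq y -> (forall n, x n <= y n) -> L x <= L y.
Proof.
move=> bx by_ hxy; case: hL => _ [pos _].
have := pos (fun n => 1 * y n + (-1) * x n) (bounded_seq_lin _ _ by_ bx).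
rewrite banach_limit_lin // => h.
have: 0 <= 1 * L y + -1 * L x by apply: h => n; have := hxy n; lra.
lra.
Qed.

Lemma banach_limit_shift (x : nat -> R) k :
  bounded_seq x -> L (fun n => x (n + k)%N) = L x.
Proof.
move=> bx; case: hL => _ [_ [shift _]].
elim: k => [|k IH]; first by apply: banach_limit_eq => n; rewrite addn0.
rewrite -IH -(shift _ (bounded_seq_shift k bx)).
by apply: banach_limit_eq => n; rewrite addSnnS.
Qed.

Lemma banach_limit_sum_shift (x : nat -> R) N :
  bounded_seq x -> L (fun n => \sum_(j < N) x (n + j)%N) = N%:R * L x.
Proof.
move=> bx; elim: N => [|N IH].
  rewrite (@banach_limit_eq _ (fun n => 0 * x n)) ?banach_limitZ //.
  by move=> n; rewrite big_ord0 mul0r.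
rewrite (@banach_limit_eq _ (fun n => \sum_(j < N) x (n + j)%N + x (n + N)%N));
  last by move=> n; rewrite big_ord_recr.
rewrite banach_limitD ?IH ?banach_limit_shift ?mulrSr ?mulrDl ?mul1r //.
- by apply: bounded_seq_sum => j; apply: bounded_seq_shift.
- exact: bounded_seq_shift.
Qed.

Lemma banach_limit_sparse_indicator (S : pred nat) :
  sparse S -> L (fun n => (S n)%:R) = 0.
Proof.
move=> hS; set ind := fun n => _; have bind := bounded_seq_indicator S.
have ge0 : 0 <= L ind by case: hL => _ [pos _]; apply: pos => // n; apply: ler0n.
have window N : N%:R * L ind <= 1.
  have [M hM] := hS N; case: hL => _ [_ [_ one]].
  rewrite -(banach_limit_shift M bind) -banach_limit_sum_shift;
    last exact: bounded_seq_shift M bind.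
  rewrite -[X in _ <= X]one.
  apply: banach_limit_le => [||n]; last exact: sparse_window_sum n hM.
  - apply: (bounded_seq_sum (F := fun (j : 'I_N) n => ind (n + j + M)%N)) => j.
    exact: bounded_seq_shift j (bounded_seq_shift M bind).
  - by apply/bounded_seqP; exists 1 => n; rewrite normr1.
by apply/eqP; rewrite eq_le ge0 andbT; apply: natmul_le1_le0.
Qed.

Lemma banach_limit_sparse_support (S : pred nat) (x : nat -> R) :
  sparse S -> bounded_seq x -> (forall n, ~~ S n -> x n = 0) -> L x = 0.
Proof.
move=> hS bx; have [M hM] := iffLR (bounded_seqP _) bx => x0.
have bind := bounded_seq_indicator S.
have hb n : - M * (S n)%:R <= x n <= M * (S n)%:R.
  case Sn: (S n); last by rewrite x0 ?Sn // !mulr0 lexx.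
  by rewrite !mulr1 -ler_norml.
have le1 : L (fun n => - M * (S n)%:R) <= L x.
  by apply: banach_limit_le => // [|n]; [apply: bounded_seqZ | case/andP: (hb n)].
have le2 : L x <= L (fun n => M * (S n)%:R).
  by apply: banach_limit_le => // [|n]; [apply: bounded_seqZ | case/andP: (hb n)].
rewrite !banach_limitZ // banach_limit_sparse_indicator // !mulr0 in le1 le2.
by apply/eqP; rewrite eq_le le1 le2.
Qed.

End BanachLimit.

Definition pow2 (n : nat) : bool := (n == 2 ^ trunc_log 2 n)%N.

Lemma pow2P n : reflect (exists k, n = 2 ^ k)%N (pow2 n).
Proof.
by apply: (iffP eqP) => [->|[k ->]]; [exists (trunc_log 2 n) | rewrite trunc_expnK].
Qed.

Lemma pow2_exp k : pow2 (2 ^ k)%N.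
Proof. by apply/pow2P; exists k. Qed.

Lemma not_pow2_frequently N : exists k, (N <= k)%N /\ ~~ pow2 k.
Proof.
have N_lt := ltn_expl N.+1 (isT : 1 < 2)%N.
have lt : (2 ^ N.+1 <= (2 ^ N.+1).+1 < 2 ^ N.+2)%N by rewrite [(2 ^ N.+2)%N]expnS; lia.
exists (2 ^ N.+1).+1; split; first lia.
by rewrite /pow2 (trunc_log_eq _ lt) // neq_ltn ltnSn orbT.
Qed.

Lemma sparse_pow2 : sparse pow2.
Proof.
move=> N; exists (2 ^ N)%N => a b /andP[hN hab] /pow2P[p ea] /pow2P[q eb].
move: hN hab; rewrite ea eb ltn_exp2l // => hN hpq.
have : (2 * 2 ^ p <= 2 ^ q)%N by rewrite -expnS leq_exp2l.
have := ltn_expl N (isT : 1 < 2)%N; lia.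
Qed.

Lemma sum_digits_inj (D n : nat) (a b : 'I_n -> nat) :
  (forall i, a i < D)%N -> (forall i, b i < D)%N ->
  (\sum_i a i * D ^ i = \sum_i b i * D ^ i)%N -> a =1 b.
Proof.
elim: n a b => [|n IH] a b ha hb; first by move=> _ [].
rewrite !big_ord_recl /= !expn0 !muln1.
have shift (c : 'I_n.+1 -> nat) : (\sum_(i < n) c (lift ord0 i) * D ^ bump 0 i =
    D * \sum_(i < n) c (lift ord0 i) * D ^ i)%N.
  by rewrite big_distrr /=; apply: eq_bigr => i _; rewrite /bump add1n expnS mulnCA.
rewrite !shift => hs.
have e0 : a ord0 = b ord0.
  move/(congr1 (modn^~ D)): hs.
  by rewrite ![(_ + D * _)%N]addnC ![(D * _)%N]mulnC !modnMDl !modn_small.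
have /IH eS : (\sum_(i < n) a (lift ord0 i) * D ^ i = \sum_(i < n) b (lift ord0 i) * D ^ i)%N.
  have D_gt0 : (0 < D)%N by apply: leq_ltn_trans (ha ord0).
  by move/eqP: hs; rewrite e0 eqn_add2l eqn_mul2l eqn0Ngt D_gt0 => /eqP.
by move=> i; case: (unliftP ord0 i) => [j ->|->] //; apply: eS.
Qed.

Lemma poly_nonroot_inv_nat (F : numFieldType) (q : {poly F}) :
  q != 0 -> exists j : nat, ~~ root q (j.+1%:R)^-1.
Proof.
move=> q_neq0; pose rs := [seq (j.+1%:R : F)^-1 | j <- iota 0 (size q)].
have rs_uniq : uniq rs.
  rewrite map_inj_uniq ?iota_uniq // => j k /invr_inj /eqP.
  by rewrite eqr_nat eqSS => /eqP.
have [rs_roots|/allPn[_ /mapP[j _ ->]]] := boolP (all (root q) rs); last by exists j.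
by have := max_poly_roots q_neq0 rs_roots rs_uniq; rewrite size_map size_iota ltnn.
Qed.

Section Kronecker.

Variables (F : numFieldType) (n : nat).

Definition kronecker (D : nat) (P : {mpoly F[n]}) : {poly F} :=
  \sum_(m <- msupp P) P@_m *: 'X^(\sum_i m i * D ^ i).

Lemma horner_kronecker D P t : (kronecker D P).[t] = P.@[fun i => t ^+ (D ^ i)].
Proof.
rewrite mevalE horner_sum; apply: eq_bigr => m _.
rewrite hornerZ hornerXn -prodrXr; congr (_ * _).
by apply: eq_bigr => i _; rewrite -exprM mulnC.
Qed.

Lemma kronecker_neq0 (P : {mpoly F[n]}) : P != 0 -> kronecker (msize P) P != 0.
Proof.
move=> P_neq0; set D := msize P; set e := fun m : 'X_{1..n} => (\sum_i m i * D ^ i)%N.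
have digits_lt m : m \in msupp P -> forall i, (m i < D)%N.
  move=> m_supp i; apply: leq_ltn_trans (msize_mdeg_lt m_supp).
  by rewrite mdegE (bigD1 i) //= leq_addr.
have [m0 m0_supp] : exists m0, m0 \in msupp P.
  case E: (msupp P) => [|m0 s]; last by exists m0; rewrite in_cons eqxx.
  by move/eqP: E; rewrite msupp_eq0 (negbTE P_neq0).
apply/eqP => /(congr1 (fun q : {poly F} => q`_(e m0))).
rewrite coef0 coef_sum (bigD1_seq m0) ?msupp_uniq //= coefZ coefXn eqxx mulr1.
rewrite big1_seq ?addr0 => [|m /andP[m_neq m_supp]].
  by apply/eqP; rewrite -mcoeff_msupp.
rewrite coefZ coefXn; case: (eqVneq (e m0) (e m)) => [em|]; last by rewrite mulr0.
move/negP: m_neq; case; apply/eqP/mnmP.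
exact: (sum_digits_inj (digits_lt _ m_supp) (digits_lt _ m0_supp) (esym em)).
Qed.

Lemma mpoly_nonvanishing_inv_nat (P : {mpoly F[n]}) :
  P != 0 -> exists j D : nat, P.@[fun i => (j.+1%:R)^-1 ^+ (D ^ i)] != 0.
Proof.
move=> /kronecker_neq0/poly_nonroot_inv_nat[j nonroot].
by exists j, (msize P); rewrite -horner_kronecker.
Qed.

End Kronecker.

Lemma meval_origin (F : comNzRingType) n (P : {mpoly F[n]}) :
  P@_0%MM = 0 -> P.@[fun _ => 0] = 0.
Proof.
move=> P0; rewrite mevalE big1_seq // => m _.
have [->|m_neq0] := eqVneq m 0%MM; first by rewrite P0 mul0r.
case: (pickP (fun i => m i != 0%N)) => [i /= mi|m_eq0].
  by rewrite (bigD1 i) //= expr0n (negbTE mi) mul0r mulr0.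
by case/eqP: m_neq0; apply/mnmP => i; rewrite mnm0E; apply/eqP/negbFE/m_eq0.
Qed.

Lemma meval_norm_le (F : numDomainType) n (P : {mpoly F[n]}) (v : 'I_n -> F) :
  (forall i, `|v i| <= 1) -> `|P.@[v]| <= \sum_(m <- msupp P) `|P@_m|.
Proof.
move=> v_le1; rewrite mevalE; apply: le_trans (ler_norm_sum _ _ _) _.
apply: ler_sum => m _; rewrite normrM -[leRHS]mulr1 ler_wpM2l // normr_prod.
by apply: prodr_ile1 => i _; rewrite normr_ge0 normrX exprn_ile1.
Qed.

Section DyadicFloor.

Variable F : archiRealFieldType.

Definition dyadic_floor (m : nat) (r : F) : int := Num.floor (r * 2 ^+ m).

Lemma dyadic_floor_eq_dist m r s :
  dyadic_floor m r = dyadic_floor m s -> `|r - s| * 2 ^+ m < 1.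
Proof.
rewrite /dyadic_floor => e.
have := floor_itv (r * 2 ^+ m); have := floor_itv (s * 2 ^+ m); rewrite e.
set z := Num.floor _ => /andP[s_ge s_lt] /andP[r_ge r_lt].
rewrite intrD in s_lt r_lt.
rewrite -[2 ^+ m]ger0_norm ?exprn_ge0 // -normrM mulrBl ltr_norml; apply/andP; lra.
Qed.

Lemma dyadic_floor_sep r s : r != s ->
  exists m0, forall m, (m0 <= m)%N -> dyadic_floor m r != dyadic_floor m s.
Proof.
rewrite -subr_eq0 -normr_gt0 => d_gt0.
exists (Num.Def.archi_bound `|r - s|^-1) => m m0_le; apply/eqP => /dyadic_floor_eq_dist.
apply/negP; rewrite -leNgt -ler_pdivrMl // mulr1.
apply/ltW/(lt_le_trans (archi_boundP _)); first by rewrite invr_ge0 ltW.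
by rewrite -natrX ler_nat (leq_trans m0_le) // ltnW // ltn_expl.
Qed.

Lemma dyadic_floor_injective (I : finType) (x : I -> F) :
  injective x -> exists m, injective (fun i => dyadic_floor m (x i)).
Proof.
move=> x_inj.
have /fin_all_exists[m0 m0_sep] (p : I * I) : exists m0, p.1 != p.2 ->
    forall m, (m0 <= m)%N -> dyadic_floor m (x p.1) != dyadic_floor m (x p.2).
  have [_|neq] := eqVneq p.1 p.2; first by exists 0%N.
  have [|m0 ?] := @dyadic_floor_sep (x p.1) (x p.2); first by rewrite inj_eq.
  by exists m0.
exists (\max_p m0 p)%N => i j e; apply/eqP/negPn/negP => neq.
by have := m0_sep (i, j) neq _ (leq_bigmax (i, j)); rewrite e eqxx.
Qed.

End DyadicFloor.

Definition inv_nat_pow (p : nat * nat) : R := (p.1.+1%:R)^-1 ^+ p.2.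

Lemma inv_nat_pow_01 p : 0 <= inv_nat_pow p <= 1.
Proof.
have inv_ge0 : 0 <= (p.1.+1%:R : R)^-1 by rewrite invr_ge0.
have inv_le1 : (p.1.+1%:R : R)^-1 <= 1 by rewrite invf_le1 ?ler1n ?ltr0n.
by rewrite exprn_ge0 //= exprn_ile1.
Qed.

Definition code := (nat * seq (int * (nat * nat)))%type.

Definition code_value (c : code) (r : R) : R :=
  head 0 [seq inv_nat_pow p.2 | p <- c.2 & p.1 == dyadic_floor c.1 r].

Lemma code_value_01 c r : 0 <= code_value c r <= 1.
Proof.
rewrite /code_value; case: [seq _ <- _ | _] => [|p s] /=; last exact: inv_nat_pow_01.
by rewrite lexx ler01.
Qed.

Lemma code_value_interpolate (I : finType) (x : I -> R) (e : I -> nat * nat) :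
  injective x -> exists c : code, forall i, code_value c (x i) = inv_nat_pow (e i).
Proof.
move=> /dyadic_floor_injective[m fl_inj].
exists (m, [seq (dyadic_floor m (x i), e i) | i <- enum I]) => i.
rewrite /code_value /= filter_map.
have -> : [seq j <- enum I | preim (fun j => (dyadic_floor m (x j), e j))
      (fun p => p.1 == dyadic_floor m (x i)) j] = [seq j <- enum I | pred1 i j].
  by apply: eq_filter => j /=; rewrite (inj_eq fl_inj).
by rewrite filter_pred1_uniq ?enum_uniq ?mem_enum.
Qed.

Lemma injective_nat_unbounded (f : nat -> nat) N :
  injective f -> exists t, (N <= f t)%N.
Proof.
move=> f_inj; pose s := [seq f t | t <- iota 0 N.+1].
have [small|/allPn[_ /mapP[t _ ->]]] := boolP (all (fun k => k < N)%N s);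
  last by rewrite -leqNgt; exists t.
have: (size s <= size (iota 0 N))%N.
  apply: uniq_leq_size; first by rewrite map_inj_uniq ?iota_uniq.
  by move=> k /(allP small); rewrite mem_iota.
by rewrite size_map !size_iota ltnn.
Qed.

(* Pairing with a counter makes every code occur at infinitely many indices. *)
Definition code_at (k : nat) : option code :=
  omap snd (unpickle k : option (nat * code)).

Lemma code_at_frequently (c : code) N : exists k, (N <= k)%N /\ code_at k = Some c.
Proof.
have [|t le_t] := @injective_nat_unbounded (fun t => pickle (t, c)) N.
  by move=> t1 t2 /(pcan_inj pickleK)[].
by exists (pickle (t, c)); rewrite /code_at pickleK.
Qed.

Definition seq_of_real (r : R) (n : nat) : R :=
  if pow2 n then (if code_at (trunc_log 2 n) is Some c then code_value c r else 0)
  else 0.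

Lemma seq_of_real_01 r n : 0 <= seq_of_real r n <= 1.
Proof.
rewrite /seq_of_real; case: pow2; last by rewrite lexx ler01.
by case: code_at => [c|]; [apply: code_value_01 | rewrite lexx ler01].
Qed.

Lemma seq_of_real_norm_le1 r n : `|seq_of_real r n| <= 1.
Proof. by have /andP[ge0 le1] := seq_of_real_01 r n; rewrite ger0_norm. Qed.

Lemma bounded_seq_of_real r : bounded_seq (seq_of_real r).
Proof. by apply/bounded_seqP; exists 1; apply: seq_of_real_norm_le1. Qed.

Lemma seq_of_real_off_pow2 r n : ~~ pow2 n -> seq_of_real r n = 0.
Proof. by rewrite /seq_of_real => /negbTE ->. Qed.

Lemma seq_of_real_exp r k c :
  code_at k = Some c -> seq_of_real r (2 ^ k)%N = code_value c r.
Proof. by rewrite /seq_of_real pow2_exp trunc_expnK // => ->. Qed.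

Lemma seq_of_real_inj : injective seq_of_real.
Proof.
move=> r s e; apply/eqP/negPn/negP => neq.
have b_inj : injective (fun b : bool => if b then r else s).
  by case; case=> //= rs; move: neq; rewrite rs eqxx.
have [c hc] := code_value_interpolate (fun b : bool => if b then (0, 0) else (1, 1))%N b_inj.
have [k [_ kc]] := code_at_frequently c 0.
move/(congr1 (fun f => f (2 ^ k)%N)): e.
rewrite !(seq_of_real_exp _ kc) (hc true) (hc false) /inv_nat_pow /= expr0 expr1.
by move/eqP; rewrite eq_sym invr_eq1 ?unitfE // pnatr_eq1.
Qed.

Lemma not_convergent_frequently (x : nat -> R) (a b : R) : a != b ->
  (forall N, exists k, (N <= k)%N /\ x k = a) ->
  (forall N, exists k, (N <= k)%N /\ x k = b) -> ~ convergent x.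
Proof.
move=> ab xa xb [l xl].
have d_gt0 : 0 < `|a - b| / 2 by rewrite divr_gt0 // normr_gt0 subr_eq0.
have [N xN] := xl _ (RltP d_gt0).
have [ka [Nka xka]] := xa N; have [kb [Nkb xkb]] := xb N.
move: (xN ka (ssrnat.leP Nka)) (xN kb (ssrnat.leP Nkb)).
rewrite !RdistE xka xkb => /RltP + /RltP.
have := ler_distD l a b; rewrite [`|l - b|]distrC; lra.
Qed.

Section PolynomialImage.

Variables (n : nat) (P : {mpoly R[n]}) (idx : 'I_n -> R).

Let x := mpoly_eval_seq P (fun i => seq_of_real (idx i)).

Lemma bounded_mpoly_eval_seq : bounded_seq x.
Proof.
apply/bounded_seqP; exists (\sum_(m <- msupp P) `|P@_m|) => k.
by apply: meval_norm_le => i; apply: seq_of_real_norm_le1.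
Qed.

Hypothesis P0 : P@_0%MM = 0.

Lemma mpoly_eval_seq_off_pow2 k : ~~ pow2 k -> x k = 0.
Proof.
move=> k_off; rewrite -(meval_origin P0); apply: meval_eq => i.
exact: seq_of_real_off_pow2.
Qed.

Lemma mpoly_eval_seq_frequently0 N : exists k, (N <= k)%N /\ x k = 0.
Proof.
have [k [N_le k_off]] := not_pow2_frequently N.
by exists k; rewrite mpoly_eval_seq_off_pow2.
Qed.

Hypotheses (idx_inj : injective idx) (P_neq0 : P != 0).

Lemma mpoly_eval_seq_frequently :
  exists2 C, C != 0 & forall N, exists k, (N <= k)%N /\ x k = C.
Proof.
have [j [D PjD]] := mpoly_nonvanishing_inv_nat P_neq0.
have [c c_val] := code_value_interpolate (fun i : 'I_n => (j, D ^ i)%N) idx_inj.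
exists (P.@[fun i => (j.+1%:R)^-1 ^+ (D ^ i)]) => // N.
have [k [N_le kc]] := code_at_frequently c N.
exists (2 ^ k)%N; split; first by rewrite (leq_trans N_le) // ltnW // ltn_expl.
by apply: meval_eq => i; rewrite (seq_of_real_exp _ kc) c_val.
Qed.

End PolynomialImage.

Theorem theorem3p3 :
  strongly_c_algebrable (fun x : nat -> R => c_hat x /\ ~ convergent x).
Proof.
exists seq_of_real; split; first exact: seq_of_real_inj.
split=> [r | n P idx idx_inj P_neq0 P0]; first exact: bounded_seq_of_real.
have bx := bounded_mpoly_eval_seq P idx.
have [C C_neq0 xC] := mpoly_eval_seq_frequently idx_inj P_neq0.
split; first split.
- split=> //; exists 0 => L hL.
  apply: (banach_limit_sparse_support hL sparse_pow2 bx).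
  exact: mpoly_eval_seq_off_pow2.
- exact: not_convergent_frequently C_neq0 xC (mpoly_eval_seq_frequently0 _ P0).
- move=> x_eq0; have [k [_ xk]] := xC 0%N.
  by move/eqP: C_neq0; rewrite -xk x_eq0.
Qed.
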